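(* Let $m\ge0$ be an integer and write $s_n=s_n^{(1,m+2)}$. Then for all $n\ge0$, \[ s_{n+m+2}^2-1=\sum_{k=0}^n\left\{s_k^2+2\sum_{i=0}^k P_{k+m+1-i}^{\{-2,-1,m\}}s_i^2\right\}. \]
   Context: For positive integers $p<q$, $s_n^{(p,q)}$ is defined by $s_n^{(p,q)}=\delta_{0,n}+s_{n-p}^{(p,q)}+s_{n-q}^{(p,q)}$ for $n\ge0$ and $s_n^{(p,q)}=0$ for $n<0$. $\delta_{i,j}$ is $1$ if $i=j$ and $0$ otherwise. For a finite set $W$ of integers, $P_n^W$ is the number of permutations $\pi$ of $\{1,\dots,n\}$ with $\pi(i)-i\in W$ for all $i$ (the permanent of the $n\times n$ $(0,1)$ Toeplitz matrix whose $(i,j)$ entry is $1$ iff $j-i\in W$), with $P_0^W=1$. *)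

From mathcomp Require Import all_boot all_order all_fingroup all_algebra.
Set Implicit Arguments. Unset Strict Implicit. Unset Printing Implicit Defensive.

(* s_n^{(p,q)} via fuel: s_aux p q f n computes s_n provided f > n and p >= 1.
   s_n = [n == 0] + s_{n-p} + s_{n-q}, with s_j = 0 for j < 0. *)
Fixpoint s_aux (p q fuel n : nat) : nat :=
  match fuel with
  | 0 => 0
  | f.+1 => (n == 0) + (if p <= n then s_aux p q f (n - p) else 0)
                     + (if q <= n then s_aux p q f (n - q) else 0)
  end.

Definition s_pq (p q n : nat) : nat := s_aux p q n.+1 n.

(* P_n^W : number of permutations pi of {0,...,n-1} (equivalently {1..n})
   with pi(i) - i in W for all i. *)
Definition P_W (W : seq int) (n : nat) : nat :=
  #|[set pi : 'S_n | [forall i : 'I_n, ((pi i)%:Z - (i : nat)%:Z)%R \in W]]|.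

From mathcomp Require Import all_boot all_order all_fingroup all_algebra.
From mathcomp Require Import zify ring.
Import GRing.Theory.

(* Write G(L, d) for the number of bijections from rows 1..L onto the columns
   0..L other than d in which row r goes to column r - 2, r - 1 or r + m.
   Row 0 of a permutation counted by P_(N+1) must go to column m, so
   P_(N+1) = G(N, m).  Row 1 goes either to column 0, or to column m + 1, in
   which case columns 0, ..., d - 1 are forced onto rows 2, ..., d + 1; hence
   G(L+1, d) = [d > 0] G(L, d-1) + [m <= L] G(L-d, m-d).  Together with
   s_(L+2) = s_(L+1) + s_(L-m) this recurrence shows by induction on L that
   sum_i G(L-i, d) s_i^2 = [d <= L] s_(L-d) s_(L+1).  Hence
   sum_(i <= k) P_(k+m+1-i) s_i^2 = s_k s_(k+m+1), and the identity
   telescopes from s_(k+m+3)^2 = s_(k+m+2)^2 + s_(k+1)^2 + 2 s_(k+1) s_(k+m+2). *)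

Lemma map_rem_inj (T1 T2 : eqType) (f : T1 -> T2) x s :
  injective f -> rem (f x) (map f s) = map f (rem x s).
Proof. by move=> f_inj; elim: s => //= y s ->; rewrite (inj_eq f_inj); case: eqP. Qed.

Lemma sum_pred1_uniq (s : seq nat) (P : pred nat) x (F : nat -> nat) :
  uniq s -> P =1 pred1 x -> \sum_(c <- s | P c) F c = (x \in s) * F x.
Proof.
move=> Us eqP1; rewrite (eq_bigl _ _ eqP1); have [xs | xNs] := boolP (x \in s).
  by rewrite -big_filter filter_pred1_uniq // big_seq1 mul1n.
by rewrite big1_seq // => c /andP[/eqP-> xs]; rewrite xs in xNs.
Qed.

Lemma sum_nat_trunc (F : nat -> nat) n k : k <= n ->
  (forall i, k <= i < n -> F i = 0) -> \sum_(0 <= i < n) F i = \sum_(0 <= i < k) F i.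
Proof.
move=> le_kn F0; rewrite (big_cat_nat (leq0n k) le_kn) /= [X in _ + X]big1_seq ?addn0 //.
by move=> i /andP[_]; rewrite mem_index_iota; exact: F0.
Qed.

Lemma rem_iota x a n : rem x (iota a n) = filter (predC1 x) (iota a n).
Proof. exact/rem_filter/iota_uniq. Qed.

Lemma rem_filter_iota x (P : pred nat) a n :
  rem x (filter P (iota a n)) = filter (predC1 x) (filter P (iota a n)).
Proof. by rewrite rem_filter ?filter_uniq ?iota_uniq. Qed.

Ltac perm_eq_by_mem :=
  apply: uniq_perm => [||y]; rewrite ?rem_iota ?rem_filter_iota;
  [ by rewrite ?filter_uniq ?iota_uniq
  | by rewrite ?filter_uniq ?iota_uniq
  | rewrite !mem_filter ?mem_iota /=; lia ].

Section AdmissibleBijections.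
Variable W : seq int.

Definition admissible (r c : nat) : bool := (c%:Z - r%:Z)%R \in W.

(* A permutation [t] of [cols] stands for the bijection sending the i-th entry
   of [rows] to the i-th entry of [t]. *)
Definition nbij (rows cols : seq nat) : nat :=
  count (all2 admissible rows) (permutations cols).

Lemma nbij_perm_eq rows cols1 cols2 :
  perm_eq cols1 cols2 -> nbij rows cols1 = nbij rows cols2.
Proof. by move=> /perm_permutations /seq.permP eq12; rewrite /nbij eq12. Qed.

Lemma nbij_size rows cols : size rows != size cols -> nbij rows cols = 0.
Proof.
move=> neq; apply/eqP; rewrite eqn0Ngt -has_count; apply/hasPn => t.
by rewrite mem_permutations all2E => /perm_size ->; rewrite (negbTE neq).
Qed.

Lemma nbij_nil cols : nbij [::] cols = (cols == [::]).
Proof. by case: cols => [|c cs] //; rewrite nbij_size. Qed.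

Lemma nbij_cons r rs cols : uniq cols ->
  nbij (r :: rs) cols = \sum_(c <- cols | admissible r c) nbij rs (rem c cols).
Proof.
move=> Uc; have [->|ne] := eqVneq cols [::]; first by rewrite big_nil.
have sz : 0 < size cols by case: (cols) ne.
rewrite /nbij (seq.permP (permutationsE sz)) (undup_id Uc) count_flatten sumnE.
rewrite !big_map [RHS]big_mkcond; apply: eq_bigr => c _; rewrite count_map.
case: ifP => adm_rc; first by apply: eq_count => t /=; rewrite adm_rc.
by apply/eqP; rewrite eqn0Ngt -has_count; apply/hasPn => t _; rewrite /= adm_rc.
Qed.

Lemma nbij_uncovered rows cols c : uniq cols -> c \in cols ->
  (forall r, r \in rows -> ~~ admissible r c) -> nbij rows cols = 0.
Proof.
elim: rows cols => [|r rs IH] cols Uc cin unreached.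
  by rewrite nbij_nil; case: (cols) cin.
rewrite nbij_cons // big1_seq // => c' /andP[adm_rc' c'in].
have [eq_c'c | ne_c'c] := eqVneq c' c.
  by move: adm_rc'; rewrite eq_c'c (negbTE (unreached r (mem_head _ _))).
apply: IH; first exact: rem_uniq.
  by rewrite (mem_rem_uniq _ Uc) inE eq_sym ne_c'c.
by move=> r' r'in; apply: unreached; rewrite inE r'in orbT.
Qed.

Lemma nbij_forced r rs cols c : uniq cols -> c \in cols ->
  (forall r', r' \in rs -> ~~ admissible r' c) ->
  nbij (r :: rs) cols = admissible r c * nbij rs (rem c cols).
Proof.
move=> Uc cin unreached; rewrite nbij_cons // (big_rem c) //= big1_seq ?addn0.
  by case: (admissible r c); rewrite ?mul1n.
move=> c' /andP[_]; rewrite (mem_rem_uniq _ Uc) => /andP[ne_c'c c'in].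
apply: nbij_uncovered unreached; first exact: rem_uniq.
by rewrite (mem_rem_uniq _ Uc) inE eq_sym ne_c'c.
Qed.

Lemma nbij_map (f : nat -> nat) rows cols : injective f ->
  (forall r c, admissible (f r) (f c) = admissible r c) -> uniq cols ->
  nbij (map f rows) (map f cols) = nbij rows cols.
Proof.
move=> f_inj f_adm; elim: rows cols => [|r rs IH] cols Uc.
  by rewrite /= !nbij_nil; case: cols {Uc}.
rewrite /= !nbij_cons ?map_inj_uniq // big_map.
apply: eq_big => [c | c _]; first exact: f_adm.
by rewrite map_rem_inj // IH // rem_uniq.
Qed.

End AdmissibleBijections.

Lemma nbij_shift W x rows cols : uniq cols ->
  nbij W (map (addn x) rows) (map (addn x) cols) = nbij W rows cols.
Proof.
apply: nbij_map; first exact: addnI.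
by move=> r c; rewrite /admissible !PoszD opprD addrACA subrr add0r.
Qed.

Section PermutationSeq.
Variable n : nat.

Definition perm_seq (pi : 'S_n) : seq nat := [seq val (pi i) | i <- enum 'I_n].

Lemma perm_seq_inj : injective perm_seq.
Proof.
move=> pi1 pi2 /eq_in_map eq12; apply/permP => i; apply/val_inj.
exact: eq12 i (mem_enum _ i).
Qed.

Lemma perm_eq_perm_seq pi : perm_eq (perm_seq pi) (iota 0 n).
Proof.
rewrite /perm_seq -val_enum_ord (map_comp val pi); apply: perm_map.
apply: uniq_perm => [||i].
- by rewrite map_inj_uniq; [exact: enum_uniq | exact: perm_inj].
- exact: enum_uniq.
by rewrite mem_enum; apply/mapP; exists (perm_inv pi i); rewrite ?mem_enum ?permKV.
Qed.

Lemma perm_seq_onto t : perm_eq t (iota 0 n) -> exists pi, perm_seq pi = t.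
Proof.
move=> t_iota; have size_t : size t = n by rewrite (perm_size t_iota) size_iota.
have t_lt i : i < n -> nth 0 t i < n.
  move=> lt_in; have : nth 0 t i \in iota 0 n.
    by rewrite -(perm_mem t_iota) mem_nth ?size_t.
  by rewrite mem_iota.
have Ut : uniq t by rewrite (perm_uniq t_iota) iota_uniq.
pose g (i : 'I_n) := Ordinal (t_lt i (ltn_ord i)).
have g_inj : injective g.
  by move=> i j /(congr1 val) /eqP; rewrite /= nth_uniq ?size_t // => /eqP /val_inj.
exists (perm g_inj); rewrite /perm_seq; under eq_map do rewrite permE.
rewrite (map_comp (nth 0 t) val) val_enum_ord -size_t; exact: mkseq_nth.
Qed.

Lemma perm_eq_permutations_iota :
  perm_eq (permutations (iota 0 n)) (map perm_seq (enum 'S_n)).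
Proof.
apply: uniq_perm => [||t]; first exact: permutations_uniq.
  by rewrite map_inj_uniq; [exact: enum_uniq | exact: perm_seq_inj].
rewrite mem_permutations; apply/idP/mapP => [/perm_seq_onto[pi <-] | [pi _ ->]].
  by exists pi; rewrite ?mem_enum.
exact: perm_eq_perm_seq.
Qed.

Lemma all2_perm_seq (e : rel nat) pi :
  all2 e (iota 0 n) (perm_seq pi) = [forall i : 'I_n, e i (pi i)].
Proof.
rewrite /perm_seq -val_enum_ord all2E !size_map eqxx zip_map all_map.
apply/allP/forallP => [all_e i | all_e i _]; last exact: all_e.
exact: all_e (mem_enum _ i).
Qed.

End PermutationSeq.

Lemma P_W_nbij W n : P_W W n = nbij W (iota 0 n) (iota 0 n).
Proof.
rewrite /nbij (seq.permP (perm_eq_permutations_iota n)) count_map.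
rewrite /P_W cardsE cardE size_filter -enumT; apply: eq_count => pi.
by rewrite /= all2_perm_seq.
Qed.

Section HoleCount.
Variable m : nat.
Local Notation W := ([:: -2; -1; m%:Z])%R.

Lemma admissibleE r c : admissible W r c = [|| c.+2 == r, c.+1 == r | c == r + m].
Proof.
by rewrite /admissible !inE; lia.
Qed.

Definition nbij_hole (L d : nat) : nat := nbij W (iota 1 L) (rem d (iota 0 L.+1)).

Lemma nbij_hole_shift x L d :
  nbij W (iota x.+1 L) (rem (x + d) (iota x L.+1)) = nbij_hole L d.
Proof.
have -> : iota x.+1 L = map (addn x) (iota 1 L) by rewrite -iotaDl addn1.
have -> : iota x L.+1 = map (addn x) (iota 0 L.+1) by rewrite -iotaDl addn0.
by rewrite map_rem_inj ?nbij_shift ?rem_uniq ?iota_uniq //; exact: addnI.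
Qed.

Lemma nbij_hole0 d : nbij_hole 0 d = (d == 0).
Proof. by case: d. Qed.

Lemma nbij_hole_lt L d : L < d -> nbij_hole L d = 0.
Proof.
move=> lt_Ld; apply: nbij_size.
by rewrite rem_id ?mem_iota ?size_iota; lia.
Qed.

Lemma nbij_forced_run L d k : d <= m -> m <= L -> k <= d ->
  nbij W (iota 2 L) [seq c <- iota 0 L.+2 | (c != d) && (c != m.+1)] =
  nbij W (iota k.+2 (L - k)) [seq c <- iota k (L.+2 - k) | (c != d) && (c != m.+1)].
Proof.
move=> le_dm le_mL; elim: k => [|k IH] le_kd; first by rewrite subn0.
rewrite IH; last lia.
have -> : L - k = (L - k.+1).+1 by lia.
have -> : L.+2 - k = (L.+2 - k.+1).+1 by lia.
rewrite [iota k.+2 _]/= [iota k _]/= [filter _ (k :: _)]/= ifT; last lia.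
rewrite (@nbij_forced _ _ _ _ k) ?mem_head //=.
- by rewrite eqxx admissibleE eqxx mul1n.
- by rewrite mem_filter mem_iota filter_uniq ?iota_uniq // andbT; lia.
by move=> r; rewrite mem_iota admissibleE; lia.
Qed.

Lemma nbij_holeS L d : d <= m -> nbij_hole L.+1 d =
  (if d is d'.+1 then nbij_hole L d' else 0)
  + (if m <= L then nbij_hole (L - d) (m - d) else 0).
Proof.
move=> le_dm; have Ucols : uniq (rem d (iota 0 L.+2)) by rewrite rem_uniq ?iota_uniq.
rewrite {1}/nbij_hole [iota 1 _]/= nbij_cons // (bigID (pred1 0)).
rewrite (@sum_pred1_uniq _ _ 0) ?(@sum_pred1_uniq _ _ m.+1) //;
  try by move=> c /=; rewrite admissibleE; lia.
congr (_ + _).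
  case: d le_dm {Ucols} => [|d] le_dm; first by rewrite mem_rem_uniqF ?iota_uniq.
  have -> : 0 \in rem d.+1 (iota 0 L.+2) by rewrite rem_iota mem_filter mem_iota.
  by rewrite mul1n -(nbij_hole_shift 1); apply: nbij_perm_eq; perm_eq_by_mem.
have -> : m.+1 \in rem d (iota 0 L.+2) = (m <= L).
  by rewrite rem_iota mem_filter mem_iota /=; lia.
case: (leqP m L) => [le_mL | _] //.
rewrite mul1n -(nbij_hole_shift d.+1).
have -> : nbij W (iota 2 L) (rem m.+1 (rem d (iota 0 L.+2))) =
          nbij W (iota 2 L) [seq c <- iota 0 L.+2 | (c != d) && (c != m.+1)].
  by apply: nbij_perm_eq; perm_eq_by_mem.
rewrite (@nbij_forced_run L d d le_dm le_mL (leqnn d)).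
by apply: nbij_perm_eq; perm_eq_by_mem.
Qed.

Lemma P_W_S N : P_W W N.+1 = (m <= N) * nbij_hole N m.
Proof.
rewrite P_W_nbij {1}[iota 0 N.+1]/= nbij_cons ?iota_uniq //.
rewrite (@sum_pred1_uniq _ _ m) ?iota_uniq //.
  by rewrite mem_iota.
by move=> c; rewrite admissibleE /=; lia.
Qed.

End HoleCount.

Lemma s_aux_fuel p q f f' n : 0 < p -> 0 < q -> n < f -> n < f' ->
  s_aux p q f n = s_aux p q f' n.
Proof.
move=> p_gt0 q_gt0; elim: f f' n => [|f IH] [|f'] n //= lt_nf lt_nf'.
by congr (_ + _ + _); case: ifP => // le_pn; apply: IH; lia.
Qed.

Lemma s_pqE p q n : 0 < p -> 0 < q ->
  s_pq p q n = (n == 0) + (if p <= n then s_pq p q (n - p) else 0)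
                        + (if q <= n then s_pq p q (n - q) else 0).
Proof.
move=> p_gt0 q_gt0; rewrite {1}/s_pq [LHS]/=.
by congr (_ + _ + _); case: ifP => // le_n; apply: s_aux_fuel => //; lia.
Qed.

Section SpqSequence.
Variable m : nat.
Local Notation s := (s_pq 1 (m + 2)).

Lemma s_pq0 : s 0 = 1.
Proof. by rewrite /s_pq /= addn2. Qed.

Lemma s_pqS n : s n.+1 = s n + (if m + 2 <= n.+1 then s (n.+1 - (m + 2)) else 0).
Proof. by rewrite s_pqE ?addn2 // subn1. Qed.

Lemma s_pq_small n : n <= m.+1 -> s n = 1.
Proof.
elim: n => [|n IH] le_n; first exact: s_pq0.
by rewrite s_pqS IH; last lia; case: ifP => //; lia.
Qed.

Lemma s_pqSS L : s L.+2 = s L.+1 + (if m <= L then s (L - m) else 0).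
Proof.
rewrite s_pqS; have -> : (m + 2 <= L.+2) = (m <= L) by lia.
by case: ifP => // _; have -> : L.+2 - (m + 2) = L - m by lia.
Qed.

Lemma s_pq_sq_telescope n :
  ((s (n + m + 2))%:Z ^+ 2 - 1 =
   \sum_(k < n.+1) ((s k)%:Z ^+ 2 + 2 * ((s k)%:Z * (s (k + m + 1))%:Z)))%R.
Proof.
elim: n => [|n IH].
  rewrite big_ord1 add0n [X in s X]addn2 s_pqSS leqnn subnn s_pq0.
  by rewrite !s_pq_small //; lia.
rewrite big_ord_recr -IH /=.
have -> : n.+1 + m + 2 = (n + m + 1).+2 by lia.
have -> : n.+1 + m + 1 = (n + m + 1).+1 by lia.
have -> : n + m + 2 = (n + m + 1).+1 by lia.
rewrite s_pqSS ifT; last lia.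
have -> : n + m + 1 - m = n.+1 by lia.
rewrite PoszD; ring.
Qed.

End SpqSequence.

Section HoleConvolution.
Variable m : nat.
Local Notation s := (s_pq 1 (m + 2)).

Definition hole_conv (L d : nat) : nat :=
  \sum_(0 <= i < L.+1) nbij_hole m (L - i) d * s i ^ 2.

Lemma hole_conv_trunc L d : d <= L ->
  hole_conv L d = \sum_(0 <= i < (L - d).+1) nbij_hole m (L - i) d * s i ^ 2.
Proof.
move=> le_dL; apply: sum_nat_trunc => [|i /andP[lt_i lt_iL]]; first lia.
by rewrite nbij_hole_lt ?mul0n //; lia.
Qed.

Lemma hole_convS L d : d <= m -> hole_conv L.+1 d =
  (d == 0) * s L.+1 ^ 2 + (if d is d'.+1 then hole_conv L d' else 0)
  + (if m <= L then hole_conv (L - d) (m - d) else 0).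
Proof.
move=> le_dm; rewrite {1}/hole_conv big_nat_recr //= subnn nbij_hole0 addnC -addnA.
congr (_ + _).
have -> : \sum_(0 <= i < L.+1) nbij_hole m (L.+1 - i) d * s i ^ 2 =
    \sum_(0 <= i < L.+1) (if d is d'.+1 then nbij_hole m (L - i) d' else 0) * s i ^ 2
  + \sum_(0 <= i < L.+1)
      (if m <= L - i then nbij_hole m (L - i - d) (m - d) else 0) * s i ^ 2.
  rewrite -big_split; apply: eq_big_nat => i /andP[_ lt_iL].
  by rewrite subSn // nbij_holeS // mulnDl.
congr (_ + _); first by case: d {le_dm} => [|d] //; rewrite big1.
case: (leqP m L) => [le_mL | lt_Lm]; last first.
  by rewrite big1_seq // => i /andP[_]; rewrite mem_index_iota ifN //; lia.
rewrite (@sum_nat_trunc _ _ (L - m).+1); [|lia|]; last first.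
  by move=> i lt_i; rewrite ifN //; lia.
rewrite hole_conv_trunc; last lia.
have -> : L - d - (m - d) = L - m by lia.
apply: eq_big_nat => i /andP[_ lt_i]; rewrite ifT; last lia.
by have -> : L - i - d = L - d - i by lia.
Qed.

Lemma hole_convE L d : d <= m -> hole_conv L d = (d <= L) * (s (L - d) * s L.+1).
Proof.
elim/ltn_ind: L d => [[|L]] IH d le_dm.
  by rewrite /hole_conv big_nat1 nbij_hole0 s_pq0 s_pq_small //; case: d {le_dm}.
have IHL := IH L (ltnSn L).
rewrite hole_convS // s_pqSS; case: (leqP m L) => [le_mL | lt_Lm]; last first.
  case: d le_dm => [|d] le_dm; first by rewrite subn0 !addn0 mulnn.
  by rewrite IHL ?subSS ?ltnS ?mul0n ?add0n ?addn0 //; exact: ltnW.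
rewrite (IH (L - d)); [|lia|lia].
have -> : L - d - (m - d) = L - m by lia.
have -> : m - d <= L - d by lia.
case: d le_dm => [|d] le_dm.
  by rewrite !subn0 !mul1n addn0 mulnDr -mulnn (mulnC (s (L - m))).
have -> : (L - d.+1).+1 = L - d by lia.
rewrite IHL; last exact: ltnW.
rewrite subSS ltnS (_ : d <= L); last lia.
by rewrite mul0n add0n !mul1n mulnDr (mulnC (s (L - m))).
Qed.

Lemma sum_P_W_sq k : \sum_(i < k.+1)
  P_W ([:: -2; -1; m%:Z])%R (k + m + 1 - i) * s i ^ 2 = s k * s (k + m + 1).
Proof.
have := @hole_convE (k + m) m (leqnn m).
rewrite hole_conv_trunc ?leq_addl // mul1n addnK addn1.
move=> <-; rewrite big_mkord; apply: eq_bigr => i _; have := ltn_ord i.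
move=> lt_ik; rewrite subSn; last lia.
rewrite P_W_S (_ : m <= k + m - i) ?mul1n //; lia.
Qed.

End HoleConvolution.

Local Open Scope ring_scope.

Theorem mainTheorem7 (m n : nat) :
  ((s_pq 1 (m + 2) (n + m + 2))%:Z ^+ 2 - 1 =
   \sum_(k < n.+1)
     ((s_pq 1 (m + 2) k)%:Z ^+ 2
      + 2 * \sum_(i < k.+1)
              (P_W [:: -2; -1; m%:Z] (k + m + 1 - i))%:Z
              * (s_pq 1 (m + 2) i)%:Z ^+ 2))%R.
Proof.
rewrite s_pq_sq_telescope; apply: eq_bigr => k _; congr (_ + 2 * _).
rewrite -PoszM -sum_P_W_sq -!natz natr_sum; apply: eq_bigr => i _.
by rewrite natrM natrX !natz.
Qed.
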